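(* For every integer $k\ge 1$ and every $t\in\left(0,\tfrac{1}{\sqrt{2}}\right]$, $$\frac{|Q_{k}(t^{2})|}{t}\leq 4k^{2}t+4\sum_{j=1}^{k-1}(k-j)\min\{1,(2j-1)t\}.$$
   Context: $T_k$ denotes the Chebyshev polynomial of the first kind: $T_0(t)=1$, $T_1(t)=t$, $T_{k+1}(t)=2tT_k(t)-T_{k-1}(t)$. For each integer $k\ge 0$, $P_k$ and $Q_k$ are the unique polynomials such that $T_{2k}(t)=(-1)^k+P_k(t^2)$ and $T_{2k+1}(t)=(-1)^k(2k+1)t+t\,Q_k(t^2)$ for all real $t$ (so $P_k(0)=Q_k(0)=0$). *)

From HB Require Import structures.
From mathcomp Require Import all_boot all_order all_algebra.
Set Implicit Arguments. Unset Strict Implicit. Unset Printing Implicit Defensive.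
Import Order.TTheory GRing.Theory Num.Theory.
Local Open Scope ring_scope.

Fixpoint chebT_pair (R : nzRingType) (n : nat) : {poly R} * {poly R} :=
  match n with
  | 0%N => (1, 'X)
  | n'.+1 => let: (a, b) := chebT_pair R n' in (b, 2%:P * 'X * b - a)
  end.

Definition chebT (R : nzRingType) (n : nat) : {poly R} := (chebT_pair R n).1.

(* Q_k: the polynomial with T_{2k+1}(t) = (-1)^k (2k+1) t + t Q_k(t^2), Q_k(0)=0.
   Since T_{2k+1} is odd of degree 2k+1, Q_k(x) = sum_{i=1}^{k} [coef of t^{2i+1} in T_{2k+1}] x^i. *)
Definition chebQ (R : nzRingType) (k : nat) : {poly R} :=
  \poly_(i < k.+1) (if i == 0%N then 0 else (chebT R (2 * k).+1)`_(2 * i).+1).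

Lemma chebT_rec (R : nzRingType) (n : nat) :
  chebT R n.+2 = 2%:P * 'X * chebT R n.+1 - chebT R n.
Proof. by rewrite /chebT /=; case: (chebT_pair R n). Qed.

From HB Require Import structures.
From mathcomp Require Import all_boot all_order all_algebra.
From mathcomp Require Import ring lra zify.
Set Implicit Arguments.
Unset Strict Implicit.
Unset Printing Implicit Defensive.

Import Order.TTheory GRing.Theory Num.Theory.
Local Open Scope ring_scope.

(* Write t = sin θ.  The polynomials [chebB k] of the odd part of T_{2k+1},
   T_{2k+1}(t) = (-1)^k t B_k(t^2), satisfy B_k(t^2) = sin((2k+1)θ) / sin θ,
   and Q_k = (-1)^k (B_k - (2k+1)).  Trigonometry is avoided: s_n = B_n(t^2)
   obeys s_{n+2} = 2(1 - 2t^2) s_{n+1} - s_n, whose conserved quadratic form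
   gives |t s_n| <= 1 and, for the differences, |s_{n+1} - s_n| <= 2, hence
   |s_n| <= 2n + 1 and t |s_n| <= 2t + min(1, (2n-1)t) for n >= 1.  Then
   q_n = s_n - (2n+1) satisfies q_{n+1} - q_n = -4t^2 (s_0 + ... + s_n), and
   summing these bounds gives the estimate. *)

Lemma nat_ind2 (P : nat -> Prop) :
  P 0%N -> P 1%N -> (forall n, P n -> P n.+1 -> P n.+2) -> forall n, P n.
Proof.
move=> P0 P1 PS n; suff: P n /\ P n.+1 by case.
by elim: n => [|n [Pn Pn1]]; split=> //; apply: PS.
Qed.

Section OddChebyshev.
Variable R : comNzRingType.

Fixpoint chebB_pair (n : nat) : {poly R} * {poly R} :=
  match n with
  | 0%N => (1, 3%:P - 4%:P * 'X)
  | n'.+1 => let: (a, b) := chebB_pair n' in (b, (2%:P - 4%:P * 'X) * b - a)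
  end.

Definition chebB (n : nat) : {poly R} := (chebB_pair n).1.

Lemma chebB0 : chebB 0 = 1. Proof. by []. Qed.
Lemma chebB1 : chebB 1 = 3%:P - 4%:P * 'X. Proof. by []. Qed.

Lemma chebB_rec n : chebB n.+2 = (2%:P - 4%:P * 'X) * chebB n.+1 - chebB n.
Proof. by rewrite /chebB /=; case: (chebB_pair n). Qed.

Lemma horner_chebB0 x : (chebB 0).[x] = 1.
Proof. by rewrite chebB0 hornerC. Qed.

Lemma horner_chebB1 x : (chebB 1).[x] = 3 - 4 * x.
Proof. by rewrite chebB1 hornerD hornerN hornerC hornerCM hornerX. Qed.

Lemma horner_chebB_rec x n :
  (chebB n.+2).[x] = 2 * (1 - 2 * x) * (chebB n.+1).[x] - (chebB n).[x].
Proof.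
rewrite chebB_rec hornerD hornerN hornerM hornerD hornerN.
by rewrite hornerC hornerCM hornerX; ring.
Qed.

Lemma chebT_rec2 n :
  chebT R n.+4 = (4%:P * 'X ^+ 2 - 2%:P) * chebT R n.+2 - chebT R n.
Proof. by rewrite !chebT_rec; ring. Qed.

Lemma chebT_odd k : chebT R (2 * k).+1 = (-1) ^+ k *: ('X * (chebB k \Po 'X ^+ 2)).
Proof.
elim/nat_ind2: k => [||k IHk IHk1].
- by rewrite chebB0 comp_polyC expr0 scale1r mulr1.
- rewrite chebB1 !chebT_rec /chebT /= comp_polyB comp_polyM !comp_polyC comp_polyX.
  by rewrite expr1 scaleN1r; ring.
have -> : (2 * k.+2).+1 = (2 * k).+1.+4 by lia.
have odd_succ : (2 * k).+1.+2 = (2 * k.+1).+1 by lia.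
rewrite chebT_rec2 odd_succ IHk IHk1 chebB_rec.
rewrite comp_polyB comp_polyM comp_polyB comp_polyM !comp_polyC comp_polyX.
by rewrite !exprS -!mul_polyC !polyCM; ring.
Qed.

Lemma chebB_at0 k : (chebB k).[0] = (2 * k + 1)%:R.
Proof.
elim/nat_ind2: k => [||k IHk IHk1]; rewrite ?horner_chebB0 ?horner_chebB1 ?mulr0 ?subr0 //.
rewrite horner_chebB_rec IHk IHk1 mulr0 subr0 mulr1 -natrM.
by apply/eqP; rewrite subr_eq -natrD; apply/eqP; congr _%:R; lia.
Qed.

Lemma size_affine_poly (a b : R) : (size (a%:P - b%:P * 'X)%R <= 2)%N.
Proof.
rewrite (leq_trans (size_polyD _ _)) // geq_max size_polyN.
rewrite (leq_trans (size_polyC_leq1 _)) //= (leq_trans (size_polyMleq _ _)) //.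
by rewrite size_polyX; case: (size b%:P) (size_polyC_leq1 b) => [|[]].
Qed.

Lemma size_chebB k : (size (chebB k) <= k.+1)%N.
Proof.
elim/nat_ind2: k => [||k IHk IHk1]; first by rewrite chebB0 size_poly1.
- exact: size_affine_poly.
rewrite chebB_rec (leq_trans (size_polyD _ _)) // geq_max size_polyN.
rewrite (leq_trans IHk (leqW (leqW (leqnn _)))) andbT (leq_trans (size_polyMleq _ _)) //.
by rewrite -subn1 leq_subLR add1n (leq_add (size_affine_poly _ _) IHk1).
Qed.

Lemma chebQE k : chebQ R k = (-1) ^+ k *: (chebB k - ((chebB k)`_0)%:P).
Proof.
apply/polyP => j; rewrite coef_poly coefZ coefB coefC.
case: j => [|j]; first by rewrite subrr mulr0.
rewrite subr0; case: ltnP => jk.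
  by rewrite chebT_odd coefZ coefXM /= coef_comp_poly_Xn ?dvdn_mulr ?mulKn.
by rewrite nth_default ?mulr0 // (leq_trans (size_chebB k)).
Qed.

End OddChebyshev.

Lemma rec2_invariant (R : comNzRingType) (c : R) (u : nat -> R) :
  (forall n, u n.+2 = 2 * c * u n.+1 - u n) ->
  forall n, u n.+1 ^+ 2 + u n ^+ 2 - 2 * c * u n.+1 * u n
            = u 1%N ^+ 2 + u 0%N ^+ 2 - 2 * c * u 1%N * u 0%N.
Proof. by move=> u_rec; elim=> [//|n <-]; rewrite u_rec; ring. Qed.

Lemma rec2_sqr_bound (R : realDomainType) (c : R) (u : nat -> R) :
  (forall n, u n.+2 = 2 * c * u n.+1 - u n) ->
  forall n, (1 - c ^+ 2) * u n ^+ 2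
            <= u 1%N ^+ 2 + u 0%N ^+ 2 - 2 * c * u 1%N * u 0%N.
Proof.
move=> u_rec n; rewrite -(rec2_invariant u_rec n).
have -> : u n.+1 ^+ 2 + u n ^+ 2 - 2 * c * u n.+1 * u n
        = (u n.+1 - c * u n) ^+ 2 + (1 - c ^+ 2) * u n ^+ 2 by ring.
by rewrite lerDr sqr_ge0.
Qed.

Lemma sum_weightS (R : nzSemiRingType) (f : nat -> R) k :
  \sum_(1 <= j < k.+1) (k.+1 - j)%:R * f j
  = \sum_(1 <= j < k) (k - j)%:R * f j + \sum_(1 <= j < k.+1) f j.
Proof.
case: k => [|k]; first by rewrite !big_geq // addr0.
have -> : \sum_(1 <= j < k.+1) (k.+1 - j)%:R * f j
          = \sum_(1 <= j < k.+2) (k.+1 - j)%:R * f j.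
  by rewrite [RHS]big_nat_recr //= subnn mul0r addr0.
rewrite -big_split /=.
apply: eq_big_nat => j /andP [_ jk].
by rewrite subSn // -natr1 mulrDl mul1r.
Qed.

Lemma normr_le_sqr (R : realDomainType) (y a : R) :
  0 <= a -> y ^+ 2 <= a ^+ 2 -> `|y| <= a.
Proof. by move=> a_ge0; rewrite -[y ^+ 2]real_normK ?num_real // ler_sqr ?nnegrE. Qed.

Section DirichletKernel.
Variable R : realDomainType.
Variable t : R.
Hypothesis t_gt0 : 0 < t.
Hypothesis sqr_t_lt1 : t ^+ 2 < 1.

Local Notation x := (t ^+ 2).
Local Notation c := (1 - 2 * t ^+ 2).
Local Notation s n := (chebB R n).[t ^+ 2].

Lemma normr_t_s_le1 n : `|t * s n| <= 1.
Proof.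
have := rec2_sqr_bound (horner_chebB_rec x) n.
rewrite horner_chebB0 horner_chebB1.
have -> : (1 - c ^+ 2) * s n ^+ 2 = 4 * (1 - x) * (x * s n ^+ 2) by ring.
have -> : (3 - 4 * x) ^+ 2 + 1 ^+ 2 - 2 * c * (3 - 4 * x) * 1 = 4 * (1 - x) * 1 by ring.
rewrite ler_pM2l ?mulr_gt0 ?subr_gt0 // => xs2_le1.
by apply: normr_le_sqr; rewrite // exprMn expr1n.
Qed.

Lemma normr_s_succ_sub n : `|s n.+1 - s n| <= 2.
Proof.
have d_rec m : s m.+3 - s m.+2 = 2 * c * (s m.+2 - s m.+1) - (s m.+1 - s m).
  by rewrite !horner_chebB_rec; ring.
have := rec2_sqr_bound (u := fun m => s m.+1 - s m) d_rec n.
rewrite /= horner_chebB_rec horner_chebB0 horner_chebB1; set bnd := (X in _ <= X).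
have -> : bnd = (1 - c ^+ 2) * 2 ^+ 2 by rewrite /bnd; ring.
have -> : 1 - c ^+ 2 = 4 * (1 - x) * x by ring.
by rewrite ler_pM2l ?mulr_gt0 ?subr_gt0 //; apply: normr_le_sqr.
Qed.

Lemma normr_s_le n : `|s n| <= (2 * n + 1)%:R.
Proof.
elim: n => [|n IHn]; first by rewrite horner_chebB0 normr1.
have -> : s n.+1 = s n + (s n.+1 - s n) by ring.
have -> : (2 * n.+1 + 1)%:R = (2 * n + 1)%:R + 2 :> R.
  by rewrite -natrD; congr _%:R; lia.
by rewrite (le_trans (ler_normD _ _)) // lerD ?normr_s_succ_sub.
Qed.

Local Notation mu j := (Num.min 1 ((2 * j - 1)%:R * t)).

Lemma t_normr_s_le n : t * `|s n.+1| <= 2 * t + mu n.+1.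
Proof.
have ts_le1 : t * `|s n.+1| <= 1.
  by have := normr_t_s_le1 n.+1; rewrite normrM gtr0_norm.
have ts_le : t * `|s n.+1| <= (2 * n.+1 + 1)%:R * t.
  by rewrite mulrC ler_pM2r ?normr_s_le.
have -> : (2 * n.+1 - 1)%:R = (2 * n.+1 + 1)%:R - 2 :> R.
  by apply/eqP; rewrite eq_sym subr_eq -natrD; apply/eqP; congr _%:R; lia.
rewrite -lerBlDl le_min (le_trans _ ts_le1) ?gerBl ?mulr_ge0 ?(ltW t_gt0) //=.
by rewrite mulrBl lerB.
Qed.

Lemma sum_t_normr_s_le k :
  t * \sum_(0 <= i < k.+1) `|s i| <= (2 * k + 1)%:R * t + \sum_(1 <= j < k.+1) mu j.
Proof.
elim: k => [|k IHk].
  by rewrite big_nat1 big_geq // horner_chebB0 normr1 mulr1 addr0 mul1r.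
rewrite big_nat_recr //= (big_nat_recr k.+1) //= mulrDr.
have := t_normr_s_le k.
have -> : (2 * k.+1 + 1)%:R = (2 * k + 1)%:R + 2 :> R.
  by rewrite -natrD; congr _%:R; lia.
lra.
Qed.

Local Notation q n := (s n - (2 * n + 1)%:R).

Lemma q_succ_sub k : q k.+1 - q k = - (4 * x) * \sum_(0 <= i < k.+1) s i.
Proof.
elim: k => [|k IHk]; first by rewrite horner_chebB0 horner_chebB1 big_nat1 horner_chebB0; ring.
by rewrite big_nat_recr //= mulrDr -IHk horner_chebB_rec !natrD !natrM; ring.
Qed.

Local Notation bound k :=
  (4 * (k ^ 2)%:R * t + 4 * \sum_(1 <= j < k) (k - j)%:R * mu j).

Lemma boundS k :
  bound k.+1 = bound k + 4 * ((2 * k + 1)%:R * t + \sum_(1 <= j < k.+1) mu j).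
Proof.
have -> : (k.+1 ^ 2)%:R = (k ^ 2)%:R + (2 * k + 1)%:R :> R.
  by rewrite -natrD; congr _%:R; rewrite -!mulnn; lia.
by rewrite sum_weightS; ring.
Qed.

Lemma normr_q_le k : `|q k| <= bound k * t.
Proof.
elim: k => [|k IHk].
  by rewrite horner_chebB0 subrr normr0 big_geq // !mulr0 mul0r addr0 mul0r.
have -> : q k.+1 = q k + (q k.+1 - q k) by ring.
rewrite (le_trans (ler_normD _ _)) // q_succ_sub boundS (mulrDl (bound k)) lerD //.
have x4_ge0 : 0 <= 4 * x by rewrite mulr_ge0 ?sqr_ge0.
rewrite normrM normrN (ger0_norm x4_ge0).
apply: le_trans (ler_wpM2l x4_ge0 (ler_norm_sum _ _ _)) _.
have := ler_wpM2l (mulr_ge0 (ler0n R 4) (ltW t_gt0)) (sum_t_normr_s_le k).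
by rewrite expr2 -!mulrA (mulrC (_ + _) t).
Qed.

End DirichletKernel.

Lemma sqr_le_inv2 (R : rcfType) (t : R) :
  0 <= t -> t <= (Num.sqrt 2)^-1 -> t ^+ 2 <= 2^-1.
Proof.
move=> t_ge0 t_le.
have -> : 2^-1 = (Num.sqrt 2)^-1 ^+ 2 :> R by rewrite exprVn sqr_sqrtr ?ler0n.
by rewrite ler_sqr ?nnegrE ?invr_ge0 ?sqrtr_ge0.
Qed.

Theorem mainTheorem3 (R : rcfType) (k : nat) (t : R) :
  (1 <= k)%N -> 0 < t -> t <= (Num.sqrt 2)^-1 ->
  `|(chebQ R k).[t ^+ 2]| / t <=
    4 * (k ^ 2)%:R * t
    + 4 * \sum_(1 <= j < k) (k - j)%:R * Num.min 1 ((2 * j - 1)%:R * t).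
Proof.
move=> _ t_gt0 t_le.
have t2_lt1 : t ^+ 2 < 1.
  by apply: le_lt_trans (sqr_le_inv2 (ltW t_gt0) t_le) _; rewrite invf_lt1 ?ltr1n.
rewrite chebQE hornerZ hornerD hornerN hornerC -horner_coef0 chebB_at0.
rewrite normrM normrX normrN normr1 expr1n mul1r ler_pdivrMr //.
exact: normr_q_le.
Qed.
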